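(* Let $\mathcal{X}=\{x\in\mathbb{R}^d:\|x\|_2\le B\}$, $\mathcal{Y}=\{1,\dots,k\}$, $\mathcal{Z}=\mathcal{X}\times\mathcal{Y}$ with metric $d_\mathcal{Z}((x,y),(x',y'))=\|x-x'\|_2+\mathbb{1}_{(y\ne y')}$. Let $\sigma_1,\dots,\sigma_L$ be coordinatewise activations with $\sigma_i$ $\rho_i$-Lipschitz and $\sigma_i(0)=0$, and for $\mathcal{A}=(A_1,\dots,A_L)$, $A_i\in\mathbb{R}^{d_i\times d_{i-1}}$, $d_0=d$, $d_L=k$, let $\mathcal{H}_\mathcal{A}(x)=\sigma_L(A_L\sigma_{L-1}(\cdots\sigma_1(A_1x)\cdots))$. Let $\mathcal{M}(v,y)=v_y-\max_{j\ne y}v_j$ and, for $\gamma>0$, $l_\gamma(r)=0$ if $r<-\gamma$, $1+r/\gamma$ if $r\in[-\gamma,0]$, $1$ if $r>0$. Let $\mathcal{F}=\{(x,y)\mapsto l_\gamma(-\mathcal{M}(\mathcal{H}_\mathcal{A}(x),y)):\|A_i\|_\sigma\le s_i,\|A_i\|_F\le b_i\}$. Let $P_n$ be the empirical distribution of points $(x_1,y_1),\dots,(x_n,y_n)\in\mathcal{Z}$. Then for any $f\in\mathcal{F}$ (with weights $\mathcal{A}$), $\lambda^+_{f,P_n}\le C_4$, where $$C_4:=\max_j\Big\{\frac2\gamma\prod_{i=1}^L\rho_i\|A_i\|_\sigma,\ \frac1\gamma\big(\mathcal{M}(\mathcal{H}_\mathcal{A}(x_j),y_j)+\max\mathcal{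H}_\mathcal{A}(x_j)-\min\mathcal{H}_\mathcal{A}(x_j)\big)\Big\}.$$
   Context: $\max v$ and $\min v$ denote the largest and smallest coordinates of a vector $v$; $\|\cdot\|_\sigma$ and $\|\cdot\|_F$ are the spectral and Frobenius norms. $\psi_{f,P_n}(\lambda):=\mathbb{E}_{z\sim P_n}\big(\sup_{z'\in\mathcal{Z}}\{f(z')-\lambda d_\mathcal{Z}(z,z')-f(z)\}\big)$ and $\lambda^+_{f,P_n}:=\inf\{\lambda:\psi_{f,P_n}(\lambda)=0\}$. *)

From HB Require Import structures.
From mathcomp Require Import all_boot all_order all_algebra.
From mathcomp Require Import all_classical all_reals ereal.
Set Implicit Arguments. Unset Strict Implicit. Unset Printing Implicit Defensive.
Import Order.TTheory GRing.Theory Num.Theory.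
Local Open Scope classical_set_scope.
Local Open Scope ring_scope.

Section Defs.
Variable R : realType.

Definition norm2 {m : nat} (v : 'cV[R]_m) : R := Num.sqrt (\sum_i (v i 0) ^+ 2).

Definition frob_norm {m n : nat} (A : 'M[R]_(m, n)) : R :=
  Num.sqrt (\sum_i \sum_j (A i j) ^+ 2).

Definition spec_norm {m n : nat} (A : 'M[R]_(m, n)) : R :=
  sup [set norm2 (A *m x) | x in [set x : 'cV[R]_n | norm2 x <= 1]].

Definition vmax {m : nat} (v : 'cV[R]_m) : R := sup [set v i 0 | i in [set: 'I_m]].
Definition vmin {m : nat} (v : 'cV[R]_m) : R := inf [set v i 0 | i in [set: 'I_m]].

Definition margin {m : nat} (v : 'cV[R]_m) (y : 'I_m) : R :=
  v y 0 - sup [set v j 0 | j in [set j : 'I_m | j != y]].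

Definition ramp (gamma r : R) : R :=
  if r < - gamma then 0 else if r <= 0 then 1 + r / gamma else 1.

(* network: layer i (0-based) is x |-> sigma i (A i x); A i : d_{i+1} x d_i *)
Fixpoint net (dims : nat -> nat) (A : forall i, 'M[R]_(dims i.+1, dims i))
  (sigma : nat -> R -> R) (n : nat) (x : 'cV[R]_(dims 0%N)) : 'cV[R]_(dims n) :=
  match n return 'cV[R]_(dims n) with
  | 0%N => x
  | n'.+1 => map_mx (sigma n') (A n' *m net A sigma n' x)
  end.

Definition dZ {d k : nat} (z z' : 'cV[R]_d * 'I_k) : R :=
  norm2 (z.1 - z'.1) + (z.2 != z'.2)%:R.

Definition Zset {d k : nat} (B : R) : set ('cV[R]_d * 'I_k) :=
  [set z | norm2 z.1 <= B].

Definition psi {d k n : nat} (B : R) (f : 'cV[R]_d * 'I_k -> R)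
  (pts : 'I_n -> 'cV[R]_d * 'I_k) (lam : R) : R :=
  n%:R^-1 * \sum_(j < n)
    sup [set f z' - lam * dZ (pts j) z' - f (pts j) | z' in Zset B].

Definition lam_plus {d k n : nat} (B : R) (f : 'cV[R]_d * 'I_k -> R)
  (pts : 'I_n -> 'cV[R]_d * 'I_k) : \bar R :=
  ereal_inf [set (l%:E)%E | l in [set l | psi B f pts l = 0]].

End Defs.

From HB Require Import structures.
From mathcomp Require Import all_boot all_order all_algebra.
From mathcomp Require Import all_classical all_reals ereal.
From mathcomp Require Import ring lra.
Import Order.TTheory GRing.Theory Num.Theory.
Local Open Scope classical_set_scope.
Local Open Scope ring_scope.

(* Since psi(lambda) = 0 as soon as f(z') - f(z) <= lambda d_Z(z, z') for every
   sample point z, it suffices to show that the loss f is C4-Lipschitz for d_Z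
   out of each sample point.  Moving x costs at most 2/gamma times the Lipschitz
   constant prod_i rho_i ||A_i|| of the network: the ramp is 1/gamma-Lipschitz and
   the margin is 2-Lipschitz in the output vector.  Changing the label costs at
   most (M(v, y) + max v - min v)/gamma, because -M(v, y') <= max v - min v. *)

Section FiniteImage.
Context {R : realType} {T : finType} {P : set T}.
Variable g : T -> R.

Let le_sum_norm j : `|g j| <= \sum_i `|g i|.
Proof. by rewrite (bigD1 j) //= lerDl sumr_ge0. Qed.

Lemma has_ubound_fin_image : has_ubound [set g j | j in P].
Proof.
by exists (\sum_i `|g i|) => _ [j _ <-]; exact: le_trans (ler_norm _) (le_sum_norm j).
Qed.

Lemma has_lbound_fin_image : has_lbound [set g j | j in P].
Proof.
exists (- \sum_i `|g i|) => _ [j _ <-].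
by rewrite lerNl (le_trans _ (le_sum_norm j)) // -normrN ler_norm.
Qed.

Lemma le_sup_fin_image {j} : P j -> g j <= sup [set g j | j in P].
Proof. by move=> Pj; apply: ub_le_sup; [exact: has_ubound_fin_image | exists j]. Qed.

Lemma ge_inf_fin_image {j} : P j -> inf [set g j | j in P] <= g j.
Proof. by move=> Pj; apply: ge_inf; [exact: has_lbound_fin_image | exists j]. Qed.

Lemma sup_fin_image_le c :
  (exists j, P j) -> (forall j, P j -> g j <= c) -> sup [set g j | j in P] <= c.
Proof.
move=> [j Pj] g_le; apply: ge_sup; first by exists (g j), j.
by move=> _ [i Pi <-]; exact: g_le.
Qed.

End FiniteImage.

Lemma exists_ord_neq m (y : 'I_m) : (1 < m)%N -> exists j : 'I_m, j != y.
Proof.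
case: m y => [|[|m]] y // _.
by have [->|y_neq0] := eqVneq y ord0; [exists ord_max | exists ord0; rewrite eq_sym].
Qed.

Section Norm2.
Context {R : realType}.

Lemma norm2_ge0 {m} (v : 'cV[R]_m) : 0 <= norm2 v.
Proof. exact: sqrtr_ge0. Qed.

Lemma norm2_0 m : norm2 (0 : 'cV[R]_m) = 0.
Proof. by rewrite /norm2 big1 ?sqrtr0 // => i _; rewrite mxE expr0n. Qed.

Lemma coord_le_norm2 {m} (v : 'cV[R]_m) i : `|v i 0| <= norm2 v.
Proof.
rewrite -sqrtr_sqr ler_wsqrtr // (bigD1 i) //= lerDl.
by apply: sumr_ge0 => j _; rewrite sqr_ge0.
Qed.

Lemma norm2_eq0 {m} (v : 'cV[R]_m) : norm2 v = 0 -> v = 0.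
Proof.
move=> v0; apply/matrixP => i j; rewrite (ord1 j) mxE.
by apply/normr0_eq0/le_anti; rewrite normr_ge0 andbT -v0 coord_le_norm2.
Qed.

Lemma norm2Z {m} c (v : 'cV[R]_m) : norm2 (c *: v) = `|c| * norm2 v.
Proof.
rewrite /norm2 -sqrtr_sqr -sqrtrM ?sqr_ge0 // mulr_sumr.
by congr Num.sqrt; apply: eq_bigr => i _; rewrite mxE exprMn.
Qed.

Lemma norm2_map_lipschitz {m} {f : R -> R} {r : R} {a b : 'cV[R]_m} : 0 <= r ->
  (forall u v, `|f u - f v| <= r * `|u - v|) ->
  norm2 (map_mx f a - map_mx f b) <= r * norm2 (a - b).
Proof.
move=> r_ge0 f_lip; rewrite /norm2 -(ger0_norm r_ge0) -sqrtr_sqr -sqrtrM ?sqr_ge0 //.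
rewrite ler_wsqrtr // mulr_sumr; apply: ler_sum => i _; rewrite !mxE.
have := f_lip (a i 0) (b i 0).
rewrite -(real_normK (num_real (f _ - f _))) -(real_normK (num_real (a i 0 - _))).
by have := normr_ge0 (f (a i 0) - f (b i 0)); have := normr_ge0 (a i 0 - b i 0); nra.
Qed.

Lemma has_ubound_spec_norm {m k} (A : 'M[R]_(m, k)) :
  has_ubound [set norm2 (A *m x) | x in [set x : 'cV[R]_k | norm2 x <= 1]].
Proof.
exists (Num.sqrt (\sum_i (\sum_j `|A i j|) ^+ 2)) => _ [x /= x_le1 <-].
rewrite ler_wsqrtr //; apply: ler_sum => i _; rewrite mxE.
have row_le : `|\sum_j A i j * x j 0| <= \sum_j `|A i j|.
  apply: le_trans (ler_norm_sum _ _ _) _; apply: ler_sum => j _.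
  rewrite normrM ler_piMr // (le_trans (coord_le_norm2 x j)) //.
rewrite -real_normK ?num_real //.
by have := normr_ge0 (\sum_j A i j * x j 0); nra.
Qed.

Lemma spec_norm_ge0 {m k} (A : 'M[R]_(m, k)) : 0 <= spec_norm A.
Proof.
apply: ub_le_sup; first exact: has_ubound_spec_norm.
by exists 0; rewrite /= ?mulmx0 norm2_0.
Qed.

Lemma norm2_mulmx_le {m k} (A : 'M[R]_(m, k)) w :
  norm2 (A *m w) <= spec_norm A * norm2 w.
Proof.
have [/norm2_eq0 ->|w_neq0] := eqVneq (norm2 w) 0.
  by rewrite mulmx0 !norm2_0 mulr0.
have w_gt0 : 0 < norm2 w by rewrite lt_def w_neq0 norm2_ge0.
have unit_le : norm2 (A *m ((norm2 w)^-1 *: w)) <= spec_norm A.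
  apply: ub_le_sup; first exact: has_ubound_spec_norm.
  exists ((norm2 w)^-1 *: w) => //=.
  by rewrite norm2Z ger0_norm ?invr_ge0 ?norm2_ge0 // mulVf.
rewrite -scalemxAr norm2Z ger0_norm ?invr_ge0 ?norm2_ge0 // in unit_le.
by rewrite -ler_pdivrMr // mulrC.
Qed.

End Norm2.

Lemma lipschitz_const_ge0 {R : realType} {f : R -> R} {r : R} :
  (forall u v, `|f u - f v| <= r * `|u - v|) -> 0 <= r.
Proof.
move=> f_lip; have := f_lip 1 0; rewrite subr0 normr1 mulr1.
exact: le_trans (normr_ge0 _).
Qed.

Section Network.
Context {R : realType} {dims : nat -> nat} {A : forall i, 'M[R]_(dims i.+1, dims i)}.
Context {sigma : nat -> R -> R} {rho : nat -> R} {L : nat}.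
Hypothesis sigma_lip :
  forall i, (i < L)%N -> forall u v, `|sigma i u - sigma i v| <= rho i * `|u - v|.

Lemma net_lip_const_ge0 {k} : (k <= L)%N -> 0 <= \prod_(i < k) (rho i * spec_norm (A i)).
Proof.
move=> k_leL; apply: prodr_ge0 => i _; rewrite mulr_ge0 ?spec_norm_ge0 //.
exact: lipschitz_const_ge0 (sigma_lip _ (leq_trans (ltn_ord i) k_leL)).
Qed.

Lemma net_lipschitz {k} : (k <= L)%N -> forall x x',
  norm2 (net A sigma k x - net A sigma k x') <=
    \prod_(i < k) (rho i * spec_norm (A i)) * norm2 (x - x').
Proof.
elim: k => [|k IHk] k_ltL x x' /=; first by rewrite big_ord0 mul1r.
have rho_ge0 := lipschitz_const_ge0 (sigma_lip _ k_ltL).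
apply: le_trans (norm2_map_lipschitz rho_ge0 (sigma_lip _ k_ltL)) _.
rewrite -mulmxBr big_ord_recr /= [_ * (rho k * _)]mulrC -!mulrA ler_wpM2l //.
apply: le_trans (norm2_mulmx_le _ _) _; rewrite ler_wpM2l ?spec_norm_ge0 //.
exact: IHk (ltnW k_ltL) x x'.
Qed.

End Network.

Section MarginLoss.
Context {R : realType}.

Lemma margin_sub_le {m} (v v' : 'cV[R]_m) (y : 'I_m) : (1 < m)%N ->
  margin v y - margin v' y <= 2 * norm2 (v - v').
Proof.
move=> m_gt1; rewrite /margin.
have coord_dist j : `|v j 0 - v' j 0| <= norm2 (v - v').
  by have := coord_le_norm2 (v - v') j; rewrite !mxE.
have sup_le : sup [set v' j 0 | j in [set j : 'I_m | j != y]] <=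
    sup [set v j 0 | j in [set j : 'I_m | j != y]] + norm2 (v - v').
  apply: sup_fin_image_le => [|j j_neq]; first exact: exists_ord_neq.
  have := le_sup_fin_image (fun j => v j 0) j_neq.
  by have := coord_dist j; rewrite ler_norml => /andP[]; lra.
by have := coord_dist y; rewrite ler_norml => /andP[]; lra.
Qed.

Lemma oppr_margin_le {m} (v : 'cV[R]_m) (y : 'I_m) : (1 < m)%N ->
  - margin v y <= vmax v - vmin v.
Proof.
move=> m_gt1; rewrite /margin /vmax /vmin.
have inf_le := ge_inf_fin_image (P := [set: 'I_m]) (fun j => v j 0) (j := y) I.
have sup_le : sup [set v j 0 | j in [set j : 'I_m | j != y]] <=
    sup [set v j 0 | j in [set: 'I_m]].
  apply: sup_fin_image_le => [|j _]; first exact: exists_ord_neq.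
  exact: (le_sup_fin_image (P := [set: 'I_m]) (fun j => v j 0) I).
lra.
Qed.

Lemma ramp_sub_le (gamma a b c : R) : 0 < gamma -> 0 <= c -> a - b <= c ->
  ramp gamma a - ramp gamma b <= c / gamma.
Proof.
move=> gamma_gt0 c_ge0 ab_le; rewrite /ramp.
have gammaV_gt0 : 0 < gamma^-1 by rewrite invr_gt0.
have gammaK : gamma * gamma^-1 = 1 by rewrite mulfV ?gt_eqF.
move: gammaV_gt0 gammaK; set t := gamma^-1 => *.
by case: (ltP a (- gamma)) => ?; case: (leP a 0) => ?;
  case: (ltP b (- gamma)) => ?; case: (leP b 0) => ? /=; nra.
Qed.

Section Transport.
Context {d k : nat} {H : 'cV[R]_d -> 'cV[R]_k} {gamma K : R}.
Hypotheses (k_gt1 : (1 < k)%N) (gamma_gt0 : 0 < gamma) (K_ge0 : 0 <= K).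
Hypothesis H_lip : forall x x', norm2 (H x - H x') <= K * norm2 (x - x').

Let f (z : 'cV[R]_d * 'I_k) := ramp gamma (- margin (H z.1) z.2).

Lemma ramp_margin_sub_le_input x x' y :
  f (x', y) - f (x, y) <= 2 / gamma * K * norm2 (x - x').
Proof.
have -> : 2 / gamma * K * norm2 (x - x') = 2 * (K * norm2 (x - x')) / gamma by ring.
apply: ramp_sub_le; rewrite ?mulr_ge0 ?norm2_ge0 //.
rewrite /= opprK addrC (le_trans (margin_sub_le _ _ _ k_gt1)) //.
by rewrite ler_pM2l // H_lip.
Qed.

Lemma ramp_margin_sub_le_label x y y' :
  f (x, y') - f (x, y) <= gamma^-1 * (margin (H x) y + vmax (H x) - vmin (H x)).
Proof.
have := oppr_margin_le (H x) y k_gt1; have := oppr_margin_le (H x) y' k_gt1.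
by rewrite /f /= mulrC => *; apply: ramp_sub_le => //; lra.
Qed.

Lemma ramp_margin_transport C x y z' :
  2 / gamma * K <= C ->
  gamma^-1 * (margin (H x) y + vmax (H x) - vmin (H x)) <= C ->
  f z' - f (x, y) <= C * dZ (x, y) z'.
Proof.
case: z' => x' y' C_ge_input C_ge_label; rewrite /dZ /= mulrDr.
have x_cost : f (x', y') - f (x, y') <= C * norm2 (x - x').
  by apply: le_trans (ramp_margin_sub_le_input _ _ _) _; rewrite ler_wpM2r ?norm2_ge0.
have [->|_] := eqVneq y y'; rewrite /= ?mulr0 ?addr0 ?mulr1 //.
have C_ge0 : 0 <= C by rewrite (le_trans _ C_ge_input) // mulr_ge0 // divr_ge0 // ltW.
have := ramp_margin_sub_le_label x y y'; lra.
Qed.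

End Transport.
End MarginLoss.

Section Robustness.
Variables (R : realType) (d k n : nat) (B : R).
Variables (f : 'cV[R]_d * 'I_k -> R) (pts : 'I_n -> 'cV[R]_d * 'I_k).

Lemma psi_eq0 lam : (forall j, Zset B (pts j)) ->
  (forall j z', Zset B z' -> f z' - f (pts j) <= lam * dZ (pts j) z') ->
  psi B f pts lam = 0.
Proof.
move=> pts_in f_transport; rewrite /psi big1 ?mulr0 // => j _.
set S := [set _ | _ in _].
have S_le0 : ubound S 0 by move=> _ [z' /(f_transport j) le_z' <-]; lra.
have S0 : S 0.
  by exists (pts j); rewrite // /dZ subrr norm2_0 eqxx addr0 mulr0 subr0 subrr.
by apply: le_anti; rewrite ge_sup ?ub_le_sup //; exists 0.
Qed.

Lemma lam_plus_le lam : psi B f pts lam = 0 -> (lam_plus B f pts <= lam%:E)%E.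
Proof. by move=> psi0; apply: ereal_inf_lbound; exists lam. Qed.

End Robustness.

Theorem lemmaC2 (R : realType) (dims : nat -> nat) (L : nat) (B gamma : R)
  (sigma : nat -> R -> R) (rho s b : nat -> R)
  (A : forall i : nat, 'M[R]_(dims i.+1, dims i))
  (n : nat) (pts : 'I_n -> 'cV[R]_(dims 0%N) * 'I_(dims L)) :
  (1 < dims L)%N ->
  0 < gamma ->
  (forall i, (i < L)%N -> forall u v, `|sigma i u - sigma i v| <= rho i * `|u - v|) ->
  (forall i, (i < L)%N -> sigma i 0 = 0) ->
  (forall i, (i < L)%N -> spec_norm (A i) <= s i /\ frob_norm (A i) <= b i) ->
  (0 < n)%N ->
  (forall j, norm2 (pts j).1 <= B) ->
  let H := net A sigma L in
  let f := fun z : 'cV[R]_(dims 0%N) * 'I_(dims L) =>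
             ramp gamma (- margin (H z.1) z.2) in
  let C4 := sup [set Num.max
                   (2 / gamma * \prod_(i < L) (rho i * spec_norm (A i)))
                   (gamma^-1 * (margin (H (pts j).1) (pts j).2
                                + vmax (H (pts j).1) - vmin (H (pts j).1)))
                 | j in [set: 'I_n]] in
  (lam_plus B f pts <= C4%:E)%E.
Proof.
move=> k_gt1 gamma_gt0 sigma_lip _ _ _ pts_in; cbv zeta.
set H := net A sigma L; set K := \prod_(i < L) _.
have K_ge0 : 0 <= K := net_lip_const_ge0 sigma_lip (leqnn L).
have H_lip : forall x x', norm2 (H x - H x') <= K * norm2 (x - x') :=
  net_lipschitz sigma_lip (leqnn L).
apply/lam_plus_le/psi_eq0 => // j z' _.
have := le_sup_fin_image (P := [set: 'I_n]) (fun j => Num.max (2 / gamma * K)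
  (gamma^-1 * (margin (H (pts j).1) (pts j).2
               + vmax (H (pts j).1) - vmin (H (pts j).1)))) (j := j) I.
rewrite ge_max => /andP[C4_ge_input].
case: (pts j) => x y C4_ge_label.
exact: (ramp_margin_transport k_gt1 gamma_gt0 K_ge0 H_lip).
Qed.
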